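(* Let $g$ be a total recursive function such that, writing $\Phi_i(x,y)$ for the $i$-th $\Sigma^0_2$ formula, $\Phi_i(x,y)$ holds iff $W_{g(i,x,y)}$ is finite. Let $F(i,x,y,s)=\max_{y'\leq y}|W_{g(i,x,y'),s}|$, let $A_i=\{x:\forall y\ \lim_{s\to\infty}F(i,x,y,s)<\infty\}$, and let $$x(i,n,y,s)=\min\{x\in B^n:\forall x'\in B^n\ F(i,x,y,s)\leq F(i,x',y,s)\}.$$ Let $n$ be a natural number and $i$ an index such that $A_i$ is an infinite set with weak apartness and $A_i\cap B^n\neq\emptyset$. Then $\lim_{y\to\infty}\lim_{s\to\infty}x(i,n,y,s)$ exists and equals the unique element of $A_i\cap B^n$.
   Context: $W_e$ denotes the $e$-th recursively enumerable set and $W_{e,s}$ its enumeration up to stage $s$. For $x=\sum_{i=0}^{k}2^{n_i}\in\mathbb{Z}^+$ with $n_0<\cdots<n_k$, set $\mu(x)=n_k$ and $\lambda(x)=n_0$. For each $n$, $B^n=\{x\in\mathbb{Z}^+:\mu(x)=n\}$. A set $A$ has weak apartness if for every natural number $m$, $B^m\cap A$ has at most one element, and for every natural number $l$, there are at most two $x\in A$ with $\lambda(x)=l$. *)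

From mathcomp Require Import all_boot.
Set Implicit Arguments. Unset Strict Implicit. Unset Printing Implicit Defensive.

(* Binary expansion: for x > 0, mu x = largest exponent, lambda x = smallest. *)
Definition mu (x : nat) : nat := trunc_log 2 x.
Definition lambda (x : nat) : nat := logn 2 x.

Definition Bn (n x : nat) : bool := (0 < x) && (mu x == n).

(* Finite enumeration of B^n in increasing order (B^n is contained in [0, 2^(n+1))). *)
Definition Bn_list (n : nat) : seq nat := [seq x <- iota 0 (2 ^ n.+1) | Bn n x].

(* Weak apartness of a set A of naturals (lambda/mu only on positive elements). *)
Definition weak_apartness (A : nat -> Prop) : Prop :=
  (forall m x x', A x -> A x' -> Bn m x -> Bn m x' -> x = x') /\
  (forall l x1 x2 x3, A x1 -> A x2 -> A x3 -> 0 < x1 -> 0 < x2 -> 0 < x3 ->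
     lambda x1 = l -> lambda x2 = l -> lambda x3 = l ->
     x1 = x2 \/ x1 = x3 \/ x2 = x3).

Definition infinite_set (A : nat -> Prop) : Prop := forall m, exists x, m <= x /\ A x.

(* Ws e s : the finite stage-s approximation W_{e,s} of the e-th r.e. set,
   given as a duplicate-free list; |W_{e,s}| = size (Ws e s). *)

Definition F (Ws : nat -> nat -> seq nat) (g : nat -> nat -> nat -> nat)
  (i x y s : nat) : nat :=
  \max_(y' < y.+1) size (Ws (g i x y') s).

Definition lim_is (u : nat -> nat) (c : nat) : Prop :=
  exists s0, forall s, s0 <= s -> u s = c.

Definition Aset Ws g (i : nat) (x : nat) : Prop :=
  forall y, exists c, lim_is (fun s => F Ws g i x y s) c.

Definition xmin Ws g (i n y s : nat) : nat :=
  let L := Bn_list n in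
  nth 0 L (find (fun x => all (fun x' => F Ws g i x y s <= F Ws g i x' y s) L) L).

(** Each stage function [s |-> F(i,x,y,s)] is nondecreasing, so it either
    stabilises or diverges, and [x] is in [A_i] exactly when it stabilises for
    every [y].  Let [a] be the element of [A_i ∩ B^n].  Over the finite block
    [B^n] every comparison [F(i,x,y,s) <= F(i,x',y,s)] stabilises in [s] unless
    both sides diverge, and then [x] is not minimal anyway, being beaten by the
    bounded [F(i,a,y,s)]; so the first minimiser [x(i,n,y,s)] stabilises.  By
    weak apartness (only its first clause is needed, and the infinitude of
    [A_i] not at all) every other [b] in [B^n] lies outside [A_i], so
    [F(i,b,y,s)] diverges for some [y], hence for all larger [y]; past the
    largest of these finitely many thresholds, [a] is eventually the unique
    minimiser. *)
From Stdlib Require Import ClassicalEpsilon.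
From mathcomp Require Import all_boot zify.
Set Implicit Arguments. Unset Strict Implicit.

(* [lim_is u c] is [eventually (fun s => u s = c)] by conversion. *)
Definition eventually (P : nat -> Prop) : Prop := exists s0, forall s, s0 <= s -> P s.

Definition unbounded (u : nat -> nat) : Prop := forall K, exists s, K < u s.

Lemma eventually_and (P Q : nat -> Prop) :
  eventually P -> eventually Q -> eventually (fun s => P s /\ Q s).
Proof.
move=> [s1 HP] [s2 HQ]; exists (maxn s1 s2) => s; rewrite geq_max => /andP[h1 h2].
by split; [apply: HP | apply: HQ].
Qed.

Lemma eventually_impl (P Q : nat -> Prop) :
  (forall s, P s -> Q s) -> eventually P -> eventually Q.
Proof. by move=> PQ [s0 HP]; exists s0 => s /HP /PQ. Qed.

Lemma eventually_all_mem (T : eqType) (L : seq T) (P : nat -> T -> Prop) :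
  (forall x, x \in L -> eventually (P^~ x)) ->
  eventually (fun s => forall x, x \in L -> P s x).
Proof.
elim: L => [|y L IH] HL; first by exists 0.
have evL := IH (fun x xL => HL x (mem_behead (s := y :: L) xL)).
apply: eventually_impl (eventually_and (HL y (mem_head y L)) evL) => s [Py PL] x.
by rewrite in_cons => /orP[/eqP -> | /PL].
Qed.

Lemma eventually_eq_in (T : eqType) (R : Type) (L : seq T) (p : nat -> T -> R) :
  (forall x, x \in L -> exists r, eventually (fun s => p s x = r)) ->
  exists q : T -> R, eventually (fun s => {in L, p s =1 q}).
Proof.
elim: L => [|y L IH] HL; first by exists (p 0) => //; exists 0.
have [r evy] := HL y (mem_head y L).
have [q evL] := IH (fun x xL => HL x (mem_behead (s := y :: L) xL)).
exists (fun x => if x == y then r else q x).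
apply: eventually_impl (eventually_and evy evL) => s [py pL] x.
by rewrite in_cons; case: eqP => [-> | _ /pL].
Qed.

Lemma lim_is_unique (u : nat -> nat) c d : lim_is u c -> lim_is u d -> c = d.
Proof.
move=> [s1 Hc] [s2 Hd].
by rewrite -(Hc (maxn s1 s2)) ?leq_maxl // (Hd (maxn s1 s2)) ?leq_maxr.
Qed.

Section NondecreasingSequences.

Variable u : nat -> nat.
Hypothesis u_nd : {homo u : s t / s <= t}.

Lemma bounded_nondecreasing_lim K : (forall s, u s <= K) -> exists c, lim_is u c.
Proof.
move=> u_le; suff: forall d s0, K - u s0 = d -> exists c, lim_is u c.
  by move=> /(_ _ 0 erefl).
elim/ltn_ind=> d IH s0 gap.
have [[s1 gt_s1] | stuck] := classic (exists s1, u s0 < u s1).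
  by apply: (IH (K - u s1)) (erefl _); have := u_le s1; lia.
exists (u s0), s0 => s le_s0s; apply/eqP; rewrite eqn_leq [u s0 <= _]u_nd // andbT.
by rewrite leqNgt; apply/negP => lt; apply: stuck; exists s.
Qed.

Lemma nondecreasing_limP : (exists c, lim_is u c) \/ unbounded u.
Proof.
have [|bounded] := classic (unbounded u); [by right | left].
have [K le_K] : exists K, forall s, u s <= K.
  apply: NNPP => unb; apply: bounded => K; apply: NNPP => noK; apply: unb.
  by exists K => s; rewrite leqNgt; apply/negP => lt; apply: noK; exists s.
exact: bounded_nondecreasing_lim le_K.
Qed.

Lemma unbounded_eventually_gt K : unbounded u -> eventually (fun s => K < u s).
Proof.
by move=> /(_ K)[s0 lt_s0]; exists s0 => s le_s0s; apply: leq_trans lt_s0 (u_nd le_s0s).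
Qed.

End NondecreasingSequences.

Lemma lim_eventually_lt (u v : nat -> nat) c :
  lim_is u c -> {homo v : s t / s <= t} -> unbounded v ->
  eventually (fun s => u s < v s).
Proof.
move=> lim_u v_nd /(unbounded_eventually_gt v_nd c) ev_v.
by apply: eventually_impl (eventually_and lim_u ev_v) => s [->].
Qed.

Lemma lim_eventually_leq (u v : nat -> nat) c d :
  lim_is u c -> lim_is v d -> eventually (fun s => (u s <= v s) = (c <= d)).
Proof.
by move=> lim_u lim_v; apply: eventually_impl (eventually_and lim_u lim_v) => s [-> ->].
Qed.

Section Approximations.

Variables (Ws : nat -> nat -> seq nat) (g : nat -> nat -> nat -> nat).
Hypothesis Ws_uniq : forall e s, uniq (Ws e s).
Hypothesis Ws_mono : forall e s, {subset Ws e s <= Ws e s.+1}.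
Variable i : nat.

Local Notation F := (F Ws g i).
Local Notation A := (Aset Ws g i).

Lemma F_homo_stage x y : {homo F x y : s t / s <= t}.
Proof.
have size_nd e : {homo (fun s => size (Ws e s)) : s t / s <= t}.
  apply: (@homo_leq _ _ leq leqnn leq_trans) => s.
  exact: uniq_leq_size (Ws_uniq e s) (@Ws_mono e s).
move=> s t le_st; apply/bigmax_leqP => j _.
exact: leq_trans (size_nd _ _ _ le_st) (leq_bigmax_cond j _).
Qed.

Lemma F_homo_bound x s : {homo (fun y => F x y s) : y y' / y <= y'}.
Proof.
move=> y y' le_yy'; apply/bigmax_leqP => j _.
exact: (leq_bigmax_cond (Ordinal (leq_trans (ltn_ord j) (le_yy' : y < y'.+1)))).
Qed.

Lemma notin_Aset_unbounded x : ~ A x -> eventually (fun y => unbounded (F x y)).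
Proof.
move=> /not_all_ex_not[y0 nolim]; exists y0 => y le_y0y K.
have [//|unb] := nondecreasing_limP (F_homo_stage x y0).
by have [s lt_s] := unb K; exists s; apply: leq_trans lt_s (F_homo_bound x s le_y0y).
Qed.

Variables (n a : nat).
Hypothesis Aa : A a.
Hypothesis Bna : Bn n a.

Local Notation L := (Bn_list n).

Definition minimal_at y s x : bool := all (fun x' => F x y s <= F x' y s) L.

Lemma xminE y s : xmin Ws g i n y s = nth 0 L (find (minimal_at y s) L).
Proof. by []. Qed.

Lemma mem_Bn_list x : (x \in L) = Bn n x.
Proof.
rewrite mem_filter mem_iota add0n andb_idr // => /andP[x_gt0 /eqP <-].
exact: trunc_log_ltn.
Qed.

(* A diverging [F x y] is eventually beaten by the bounded [F a y]. *)
Lemma unbounded_not_minimal y x :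
  unbounded (F x y) -> eventually (fun s => minimal_at y s x = false).
Proof.
have [c lim_a] := Aa y.
move=> /(lim_eventually_lt lim_a (F_homo_stage x y)); apply: eventually_impl => s lt_s.
by apply/negbTE/allP => /(_ a); rewrite mem_Bn_list leqNgt lt_s => /(_ Bna).
Qed.

Lemma minimal_at_converges y x : exists b, eventually (fun s => minimal_at y s x = b).
Proof.
have [[c lim_x] | unb_x] := nondecreasing_limP (F_homo_stage x y); last first.
  by exists false; apply: unbounded_not_minimal.
have [|q evq] := @eventually_eq_in _ _ L (fun s x' => F x y s <= F x' y s).
  move=> x' _; have [[d lim_x'] | unb_x'] := nondecreasing_limP (F_homo_stage x' y).
    by exists (c <= d); apply: lim_eventually_leq.
  exists true; have := lim_eventually_lt lim_x (F_homo_stage x' y) unb_x'.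
  by apply: eventually_impl => s /ltnW.
by exists (all q L); apply: eventually_impl evq => s /eq_in_all.
Qed.

Lemma xmin_converges y : exists c, lim_is (fun s => xmin Ws g i n y s) c.
Proof.
have [q evq] := eventually_eq_in (fun x (_ : x \in L) => minimal_at_converges y x).
exists (nth 0 L (find q L)).
by apply: eventually_impl evq => s /eq_in_find; rewrite xminE => ->.
Qed.

Lemma lim_xmin_unique_minimal y :
  (forall b, b \in L -> b != a -> unbounded (F b y)) ->
  lim_is (fun s => xmin Ws g i n y s) a.
Proof.
move=> unb_others; have [c lim_a] := Aa y.
have: eventually (fun s => {in L, minimal_at y s =1 pred1 a}).
  apply: eventually_all_mem => x xL /=; case: eqP => [-> | /eqP x_ne_a].
    apply: (@eventually_impl (fun s => forall x', x' \in L -> F a y s <= F x' y s)).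
      by move=> s /allP.
    apply: eventually_all_mem => x' x'L; case: (eqVneq x' a) => [-> | x'_ne_a].
      by exists 0.
    have := lim_eventually_lt lim_a (F_homo_stage _ _) (unb_others x' x'L x'_ne_a).
    by apply: eventually_impl => s /ltnW.
  exact: unbounded_not_minimal (unb_others x xL x_ne_a).
apply: eventually_impl => s /eq_in_find; rewrite xminE => ->.
by apply: nth_index; rewrite mem_Bn_list.
Qed.

End Approximations.

Theorem lemma3p4
  (Ws : nat -> nat -> seq nat) (g : nat -> nat -> nat -> nat)
  (Ws_uniq : forall e s, uniq (Ws e s))
  (Ws_mono : forall e s, {subset Ws e s <= Ws e s.+1})
  (n i : nat)
  (Hinf : infinite_set (Aset Ws g i))
  (Hwa : weak_apartness (Aset Ws g i))
  (Hne : exists x, Aset Ws g i x /\ Bn n x) :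
  exists a, [/\ Aset Ws g i a, Bn n a,
    (forall b, Aset Ws g i b -> Bn n b -> b = a) &
    exists l : nat -> nat,
      (forall y, lim_is (fun s => xmin Ws g i n y s) (l y)) /\
      lim_is l a].
Proof.
have [a [Aa Bna]] := Hne.
have a_unique b : Aset Ws g i b -> Bn n b -> b = a.
  by move=> Ab Bnb; apply: Hwa.1 Ab Aa Bnb Bna.
have [l lim_l] := choice _ (xmin_converges Ws_uniq Ws_mono Aa Bna).
exists a; split=> //; exists l; split=> //.
have [Y unb_Y] : eventually (fun y =>
    forall b, b \in Bn_list n -> b != a -> unbounded (F Ws g i b y)).
  apply: eventually_all_mem => b; rewrite mem_Bn_list => Bnb.
  have [-> | b_ne_a] := eqVneq b a; first by exists 0.
  have notAb : ~ Aset Ws g i b.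
    by move=> /a_unique /(_ Bnb) /eqP; rewrite (negbTE b_ne_a).
  by apply: eventually_impl (notin_Aset_unbounded Ws_uniq Ws_mono notAb).
exists Y => y le_Yy; apply: lim_is_unique (lim_l y) _.
exact: (lim_xmin_unique_minimal Ws_uniq Ws_mono Aa Bna (unb_Y y le_Yy)).
Qed.
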